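(* Consider the cone percolation process on $\mathbb{T}_d$ ($d\ge2$) with $R$ binomial: $\mathbb{P}(R=k)=\binom{n}{k}p^k(1-p)^{n-k}$, $k=0,1,\dots,n$, where $n\ge1$ and $p\in(0,1)$. If $(pd+1-p)^n-(1-p)^n>1$ then $\mathbb{P}[V]>0$; if $2d-d(pd+1-p)^n\ge 1$ then $\mathbb{P}[V]=0$.
   Context: Let $d\ge 2$ and let $\mathbb{T}_d$ be the infinite tree in which every vertex has exactly $d+1$ neighbours. Fix a vertex $\mathcal{O}$ (the origin); $d(u,v)$ denotes graph distance. Write $u\le v$ if $u$ lies on the path from $\mathcal{O}$ to $v$ (so $\mathcal{O}\le v$ for all $v$). Let $R$ be a random variable with values in $\{0,1,2,\dots\}$. Cone percolation on $\mathbb{T}_d$: to each vertex $u$ attach an independent copy $R_u$ of $R$; let $B_u=\{v: u\le v,\ d(u,v)\le R_u\}$; set $I_0=\{\mathcal{O}\}$, $I_{n+1}=\bigcup_{u\in I_n}B_u$, $I=\bigcup_{n\ge0}I_n$, and let $V=\{|I|=\infty\}$; $\mathbb{P}$ is the probability measure of this process. *)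

From Stdlib Require Import Reals Lra Lia Arith List Classical ClassicalEpsilon.
Import ListNotations.
Open Scope R_scope.

(** Vertices of T_d: a vertex is the list of child indices along the path
    from the origin O = [].  The origin has d+1 children (indices 0..d),
    every other vertex has d children (indices 0..d-1), so every vertex has
    exactly d+1 neighbours. *)
Definition vertex := list nat.

Definition valid (d : nat) (v : vertex) : Prop :=
  match v with
  | [] => True
  | a :: w => (a <= d)%nat /\ Forall (fun i => (i < d)%nat) w
  end.

(** u <= v  iff  u is a prefix of v  (v = u ++ w); then d(u,v) = length w. *)

(** A configuration assigns to every vertex u its radius R_u. *)
Definition config := vertex -> nat.

(** The infected set I = union of the I_k: least set containing O and
    closed under  u in I, v in B_u = {v : u <= v, d(u,v) <= R_u}  ==>  v in I. *)
Inductive infected (d : nat) (om : config) : vertex -> Prop :=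
| inf_root : infected d om []
| inf_step : forall u w, infected d om u -> valid d (u ++ w) ->
    (length w <= om u)%nat -> infected d om (u ++ w).

(** The event V = {|I| = infinity}: I is not contained in any finite list. *)
Definition percolates (d : nat) (om : config) : Prop :=
  ~ exists l : list vertex, forall v, infected d om v -> In v l.

Definition children (d : nat) (v : vertex) : list vertex :=
  match v with
  | [] => map (fun i => [i]) (seq 0 (S d))
  | _ => map (fun i => v ++ [i]) (seq 0 d)
  end.

Fixpoint level (d : nat) (k : nat) : list vertex :=
  match k with
  | O => [ [] ]
  | S m => flat_map (children d) (level d m)
  end.

Fixpoint ball (d : nat) (N : nat) : list vertex :=
  match N with
  | O => []
  | S m => ball d m ++ level d m
  end.

Definition binom_pmf (n : nat) (p : R) (k : nat) : R :=
  C n k * p ^ k * (1 - p) ^ (n - k).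

Definition ind (P : Prop) : R :=
  if excluded_middle_informative P then 1 else 0.

Definition upd (om : config) (v : vertex) (k : nat) : config :=
  fun u => if list_eq_dec Nat.eq_dec u v then k else om u.

(** Integral of the indicator of Q against the product of Binomial(n,p)
    laws on the radii of the vertices listed in vs (the other radii are
    those of om). *)
Fixpoint integ (n : nat) (p : R) (vs : list vertex)
    (Q : config -> Prop) (om : config) : R :=
  match vs with
  | [] => ind (Q om)
  | v :: vs' => sum_f_R0 (fun k => binom_pmf n p k * integ n p vs' Q (upd om v k)) n
  end.

(** The "depth-N cylinder hull" of an event A: configurations that agree on
    the ball of depth < N with some configuration in A whose radii all lie
    in the support {0,...,n} of R. *)
Definition cyl_hull (d n N : nat) (A : config -> Prop) (om : config) : Prop :=
  exists om', (forall v, valid d v -> (om' v <= n)%nat) /\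
              (forall v, In v (ball d N) -> om' v = om v) /\ A om'.

(** Probability (under the product law of i.i.d. Binomial(n,p) radii) of
    the depth-N cylinder hull of A.  For a closed event A (such as V) these
    values decrease in N to P[A]. *)
Definition cyl_prob (d n : nat) (p : R) (A : config -> Prop) (N : nat) : R :=
  integ n p (ball d N) (cyl_hull d n N A) (fun _ => 0%nat).

From Stdlib Require Import Reals Lra Lia Arith List Classical ClassicalEpsilon Permutation FunctionalExtensionality.
Import ListNotations.
Open Scope R_scope.

(* The cylinder probability of [V] at depth [N] is the probability that some
   vertex at depth [N] is infected.  Conditioning on the radius of the first
   vertex of a path, and using the independence of disjoint subtrees, it obeys
   an explicit recursion in the depth and in the reach [r] inherited from the
   ancestors.  If [E f(R) > 1], where [f(R) = d^R 1_{R>0}] counts the vertices on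
   the boundary of a cone of radius [R], a second-moment bound gives a positive
   sub-fixed point of the recursion, which bounds the survival probabilities
   from below.  If the expected cone size [d (E d^R - 1) / (d - 1)] is at most
   [1], the extinction probabilities [y] satisfy [y' >= E y^(cone size) >=
   y + p^n (1 - y)^2] every [n] levels, so they tend to [1]. *)

(** * Binomial averages *)

Lemma sum_f_R0_swap (f : nat -> nat -> R) (N M : nat) :
  sum_f_R0 (fun i => sum_f_R0 (fun j => f i j) M) N =
  sum_f_R0 (fun j => sum_f_R0 (fun i => f i j) N) M.
Proof.
  induction N as [|N IH]; simpl; auto.
  rewrite IH, <- sum_plus; reflexivity.
Qed.

Definition Ebin (n : nat) (p : R) (a : nat -> R) : R :=
  sum_f_R0 (fun j => binom_pmf n p j * a j) n.

Section BinomialAverage.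

Variables (n : nat) (p : R).

Lemma binom_pmf_ge0 k : 0 <= p <= 1 -> 0 <= binom_pmf n p k.
Proof.
  intros Hp; unfold binom_pmf, C.
  assert (0 < INR (fact k) * INR (fact (n - k)))
    by (apply Rmult_lt_0_compat; apply lt_0_INR, lt_O_fact).
  repeat apply Rmult_le_pos; try apply pow_le; try lra.
  - apply pos_INR.
  - apply Rlt_le, Rinv_0_lt_compat; lra.
Qed.

Lemma binom_pmf_0 : binom_pmf n p 0 = (1 - p) ^ n.
Proof.
  unfold binom_pmf, C; rewrite Nat.sub_0_r; simpl.
  field; apply not_0_INR, fact_neq_0.
Qed.

Lemma binom_pmf_last : binom_pmf n p n = p ^ n.
Proof.
  unfold binom_pmf, C; rewrite Nat.sub_diag; simpl.
  field; apply not_0_INR, fact_neq_0.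
Qed.

Lemma Ebin_ext a b : (forall j, (j <= n)%nat -> a j = b j) -> Ebin n p a = Ebin n p b.
Proof. intros H; apply sum_eq; intros j Hj; rewrite H; auto. Qed.

Lemma Ebin_pow x : Ebin n p (fun j => x ^ j) = (p * x + 1 - p) ^ n.
Proof.
  replace (p * x + 1 - p) with (p * x + (1 - p)) by ring; rewrite binomial.
  apply sum_eq; intros j _; unfold binom_pmf; rewrite Rpow_mult_distr; ring.
Qed.

Lemma Ebin_lincomb a b f h :
  Ebin n p (fun j => a * f j + b * h j) = a * Ebin n p f + b * Ebin n p h.
Proof.
  unfold Ebin; rewrite !scal_sum, <- sum_plus.
  apply sum_eq; intros; ring.
Qed.

Lemma Ebin_one : Ebin n p (fun _ => 1) = 1.
Proof.
  transitivity (Ebin n p (fun j => 1 ^ j)); [apply Ebin_ext; intros; rewrite pow1; auto|].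
  rewrite Ebin_pow; replace (p * 1 + 1 - p) with 1 by ring; apply pow1.
Qed.

Lemma Ebin_affine a b f : Ebin n p (fun j => a + b * f j) = a + b * Ebin n p f.
Proof.
  transitivity (Ebin n p (fun j => a * 1 + b * f j)); [apply Ebin_ext; intros; ring|].
  rewrite (Ebin_lincomb a b (fun _ => 1)), Ebin_one; ring.
Qed.

Lemma Ebin_compl f : Ebin n p (fun j => 1 - f j) = 1 - Ebin n p f.
Proof.
  transitivity (Ebin n p (fun j => 1 + -1 * f j)); [apply Ebin_ext; intros; ring|].
  rewrite Ebin_affine; ring.
Qed.

Lemma Ebin_scal a f : Ebin n p (fun j => a * f j) = a * Ebin n p f.
Proof. unfold Ebin; rewrite scal_sum; apply sum_eq; intros; ring. Qed.

Lemma Ebin_const c : Ebin n p (fun _ => c) = c.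
Proof.
  transitivity (Ebin n p (fun _ => c + 0 * 0)); [apply Ebin_ext; intros; ring|].
  rewrite (Ebin_affine c 0 (fun _ => 0)); ring.
Qed.

Lemma Ebin_swap (f : nat -> nat -> R) :
  Ebin n p (fun k => Ebin n p (fun j => f k j)) = Ebin n p (fun j => Ebin n p (fun k => f k j)).
Proof.
  unfold Ebin.
  transitivity (sum_f_R0 (fun k => sum_f_R0 (fun j =>
                  binom_pmf n p k * (binom_pmf n p j * f k j)) n) n).
  - apply sum_eq; intros; rewrite scal_sum; apply sum_eq; intros; ring.
  - rewrite sum_f_R0_swap; apply sum_eq; intros.
    rewrite scal_sum; apply sum_eq; intros; ring.
Qed.

Hypothesis Hp : 0 <= p <= 1.

Lemma Ebin_le a b : (forall j, (j <= n)%nat -> a j <= b j) -> Ebin n p a <= Ebin n p b.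
Proof.
  intros H; apply sum_Rle; intros j Hj.
  apply Rmult_le_compat_l; [apply binom_pmf_ge0|apply H]; auto.
Qed.

Lemma Ebin_le_const a c : (forall j, (j <= n)%nat -> a j <= c) -> Ebin n p a <= c.
Proof. intros H; rewrite <- (Ebin_const c); apply Ebin_le, H. Qed.

Lemma Ebin_ge_const a c : (forall j, (j <= n)%nat -> c <= a j) -> c <= Ebin n p a.
Proof. intros H; rewrite <- (Ebin_const c); apply Ebin_le, H. Qed.

Lemma Ebin_ge0 a : (forall j, 0 <= a j) -> 0 <= Ebin n p a.
Proof. intros H; apply Ebin_ge_const; auto. Qed.

Lemma Ebin_ge_last a : (forall j, 0 <= a j) -> binom_pmf n p n * a n <= Ebin n p a.
Proof.
  intros Ha; unfold Ebin.
  assert (Hterm : forall j, 0 <= binom_pmf n p j * a j)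
    by (intros; apply Rmult_le_pos; [apply binom_pmf_ge0|]; auto).
  destruct n as [|m]; simpl; [lra|].
  pose proof (cond_pos_sum _ m Hterm); lra.
Qed.

End BinomialAverage.

Lemma upd_eq (om : config) v k : upd om v k v = k.
Proof. unfold upd; destruct (list_eq_dec Nat.eq_dec v v); congruence. Qed.

Lemma upd_neq (om : config) v k u : u <> v -> upd om v k u = om u.
Proof. unfold upd; destruct (list_eq_dec Nat.eq_dec u v); tauto. Qed.

Lemma upd_upd_eq (om : config) v k j : upd (upd om v k) v j = upd om v j.
Proof.
  apply functional_extensionality; intro u; unfold upd.
  destruct (list_eq_dec Nat.eq_dec u v); auto.
Qed.

Lemma upd_comm (om : config) x y k j : x <> y -> upd (upd om y k) x j = upd (upd om x j) y k.
Proof.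
  intros Hxy; apply functional_extensionality; intro u; unfold upd.
  destruct (list_eq_dec Nat.eq_dec u x), (list_eq_dec Nat.eq_dec u y); congruence.
Qed.

Lemma ind_true (P : Prop) : P -> ind P = 1.
Proof. intros H; unfold ind; destruct (excluded_middle_informative P); tauto. Qed.

Lemma ind_false (P : Prop) : ~ P -> ind P = 0.
Proof. intros H; unfold ind; destruct (excluded_middle_informative P); tauto. Qed.

Lemma ind_iff (P Q : Prop) : (P <-> Q) -> ind P = ind Q.
Proof.
  intros H; unfold ind.
  destruct (excluded_middle_informative P), (excluded_middle_informative Q); tauto.
Qed.

Lemma ind_or (P Q : Prop) : 1 - ind (P \/ Q) = (1 - ind P) * (1 - ind Q).
Proof.
  unfold ind; destruct (excluded_middle_informative (P \/ Q)),
    (excluded_middle_informative P), (excluded_middle_informative Q); try ring; tauto.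
Qed.

(** * Expectations under the product law of the listed radii *)

Definition determined_by (S : vertex -> Prop) (F : config -> R) : Prop :=
  forall o o', (forall v, S v -> o v = o' v) -> F o = F o'.

Section Expectation.

Variables (n : nat) (p : R).

Fixpoint expect (vs : list vertex) (F : config -> R) (om : config) : R :=
  match vs with
  | [] => F om
  | v :: vs' => Ebin n p (fun k => expect vs' F (upd om v k))
  end.

Lemma integ_expect vs Q om : integ n p vs Q om = expect vs (fun o => ind (Q o)) om.
Proof.
  revert om; induction vs as [|v vs IH]; intros om; simpl; auto.
  apply Ebin_ext; intros; apply IH.
Qed.

Lemma expect_ext vs F G om : (forall o, F o = G o) -> expect vs F om = expect vs G om.
Proof.
  intros H; revert om; induction vs as [|v vs IH]; intros om; simpl; auto.
  apply Ebin_ext; intros; apply IH.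
Qed.

Lemma expect_ext_sampled vs F G om :
  (forall o, (forall v, ~ In v vs -> o v = om v) ->
             (forall v, In v vs -> (o v <= n)%nat) -> F o = G o) ->
  expect vs F om = expect vs G om.
Proof.
  revert om; induction vs as [|a vs IH]; simpl; intros om H.
  - apply H; simpl; tauto.
  - apply Ebin_ext; intros i Hi; apply IH; intros o Hoff Hon; apply H.
    + intros v Hv; rewrite Hoff by tauto; apply upd_neq; intros ->; tauto.
    + intros v Hv; destruct (in_dec (list_eq_dec Nat.eq_dec) v vs) as [Hin|Hnin]; auto.
      assert (v = a) as -> by (destruct Hv; [auto|tauto]); rewrite Hoff, upd_eq; auto.
Qed.

Lemma expect_affine vs F a b om :
  expect vs (fun o => a + b * F o) om = a + b * expect vs F om.
Proof.
  revert om; induction vs as [|v vs IH]; intros om; simpl; auto.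
  rewrite <- Ebin_affine; apply Ebin_ext; intros; apply IH.
Qed.

Lemma expect_compl vs F om : expect vs (fun o => 1 - F o) om = 1 - expect vs F om.
Proof.
  rewrite (expect_ext _ _ (fun o => 1 + -1 * F o)) by (intros; ring).
  rewrite expect_affine; ring.
Qed.

Lemma expect_const vs c om : expect vs (fun _ => c) om = c.
Proof.
  rewrite (expect_ext _ _ (fun o => c + 0 * 0)) by (intros; ring).
  rewrite (expect_affine vs (fun _ => 0)); ring.
Qed.

Lemma expect_app l1 l2 F om : expect (l1 ++ l2) F om = expect l1 (expect l2 F) om.
Proof.
  revert om; induction l1 as [|v l1 IH]; intros om; simpl; auto.
  apply Ebin_ext; intros; apply IH.
Qed.

Lemma expect_dup v l F om : expect (v :: v :: l) F om = expect (v :: l) F om.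
Proof.
  simpl; rewrite <- (Ebin_const n p (Ebin n p (fun j => expect l F (upd om v j)))).
  apply Ebin_ext; intros; apply Ebin_ext; intros; rewrite upd_upd_eq; auto.
Qed.

Lemma expect_swap x y l F om : expect (y :: x :: l) F om = expect (x :: y :: l) F om.
Proof.
  destruct (list_eq_dec Nat.eq_dec x y) as [<-|Hxy]; auto; simpl.
  rewrite Ebin_swap; apply Ebin_ext; intros; apply Ebin_ext; intros.
  rewrite upd_comm; auto.
Qed.

Lemma expect_perm l1 l2 : Permutation l1 l2 -> forall F om, expect l1 F om = expect l2 F om.
Proof.
  induction 1 as [|v l1 l2 _ IH| |l1 l2 l3 _ IH1 _ IH2]; intros F om; auto.
  - simpl; apply Ebin_ext; intros; apply IH.
  - apply expect_swap.
  - rewrite IH1; auto.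
Qed.

Lemma expect_absorb v l F om : In v l -> expect (v :: l) F om = expect l F om.
Proof.
  intros Hin; destruct (in_split _ _ Hin) as (l1 & l2 & ->).
  rewrite (expect_perm (v :: l1 ++ v :: l2) (v :: v :: l1 ++ l2))
    by (apply perm_skip, Permutation_sym, Permutation_middle).
  rewrite (expect_dup v (l1 ++ l2)); apply expect_perm, Permutation_middle.
Qed.

Lemma expect_nodup l F om : expect l F om = expect (nodup (list_eq_dec Nat.eq_dec) l) F om.
Proof.
  revert om; induction l as [|a l IH]; intros om; auto; cbn [nodup].
  destruct (in_dec (list_eq_dec Nat.eq_dec) a l) as [Hin|Hnin].
  - rewrite <- IH; apply expect_absorb; auto.
  - simpl; apply Ebin_ext; intros; apply IH.
Qed.

Lemma expect_same_elements l l' F om :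
  (forall x, In x l <-> In x l') -> expect l F om = expect l' F om.
Proof.
  intros H; rewrite (expect_nodup l), (expect_nodup l'); apply expect_perm.
  apply NoDup_Permutation; try apply NoDup_nodup.
  intros x; rewrite !nodup_In; auto.
Qed.

Lemma determined_by_upd S o o' v k :
  (forall u, S u -> o u = o' u) -> forall u, S u -> upd o v k u = upd o' v k u.
Proof. intros H u Hu; unfold upd; destruct (list_eq_dec Nat.eq_dec u v); auto. Qed.

Lemma expect_determined_by vs S F : determined_by S F -> determined_by S (expect vs F).
Proof.
  intros H; induction vs as [|v vs IH]; simpl; intros o o' Ho; auto.
  apply Ebin_ext; intros; apply IH, determined_by_upd, Ho.
Qed.

Lemma expect_mul_determined vs S F H om :
  determined_by S H -> (forall v, In v vs -> ~ S v) ->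
  expect vs (fun o => F o * H o) om = expect vs F om * H om.
Proof.
  intros HH; revert om; induction vs as [|a vs IH]; simpl; intros om Hd; auto.
  unfold Ebin; rewrite Rmult_comm, scal_sum; apply sum_eq; intros.
  rewrite IH by auto.
  rewrite (HH (upd om a i) om); [ring|].
  intros u Hu; apply upd_neq; intros Hua; subst u; apply (Hd a); auto.
Qed.

Lemma expect_app_mul l1 l2 S1 S2 F G om :
  determined_by S1 F -> determined_by S2 G ->
  (forall v, In v l1 -> ~ S2 v) -> (forall v, In v l2 -> ~ S1 v) ->
  expect (l1 ++ l2) (fun o => F o * G o) om = expect l1 F om * expect l2 G om.
Proof.
  intros HF HG H1 H2; rewrite expect_app.
  rewrite (expect_ext _ _ (fun o => F o * expect l2 G o)).
  - apply expect_mul_determined with S2; auto; apply expect_determined_by; auto.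
  - intros o; rewrite (expect_ext _ _ (fun o => G o * F o)) by (intros; ring).
    rewrite (expect_mul_determined _ S1); auto; ring.
Qed.

End Expectation.

(** * Geometry of the tree *)

(* [subtree d v k]: the descendants of [v] (for a non-root [v]) at distance < [k],
   listed depth-first so that the subtrees of the children appear as blocks. *)
Fixpoint subtree (d : nat) (v : vertex) (k : nat) : list vertex :=
  match k with
  | O => []
  | S k' => v :: flat_map (fun i => subtree d (v ++ [i]) k') (seq 0 d)
  end.

Definition ball_dfs (d N : nat) : list vertex :=
  match N with
  | O => []
  | S k => [] :: flat_map (fun i => subtree d [i] k) (seq 0 (S d))
  end.

Lemma In_subtree d v k x : In x (subtree d v k) <->
  exists w, x = v ++ w /\ (length w < k)%nat /\ Forall (fun i => (i < d)%nat) w.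
Proof.
  revert v; induction k as [|k IH]; intros v; simpl.
  - split; [tauto|]; intros (w & _ & H & _); lia.
  - rewrite in_flat_map; split.
    + intros [<-|(i & Hi & Hx)].
      * exists []; rewrite app_nil_r; simpl; auto with arith.
      * apply IH in Hx as (w & -> & Hl & Hf); apply in_seq in Hi.
        exists (i :: w); rewrite <- app_assoc; simpl; repeat split; auto with arith.
        constructor; auto; lia.
    + intros ([|i w] & -> & Hl & Hf); [left; rewrite app_nil_r; auto|right].
      inversion Hf; subst; exists i; split; [apply in_seq; lia|].
      apply IH; exists w; rewrite <- app_assoc; simpl in Hl; repeat split; auto; lia.
Qed.

Lemma valid_app_l d a b : valid d (a ++ b) -> valid d a.
Proof.
  destruct a as [|x a]; simpl; auto.
  intros [H1 H2]; apply Forall_app in H2; tauto.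
Qed.

Lemma valid_snoc d y i : valid d y -> (i < d)%nat -> valid d (y ++ [i]).
Proof.
  destruct y as [|x y]; simpl; intros Hy Hi; [split; [lia|constructor]|].
  destruct Hy; split; auto; apply Forall_app; auto.
Qed.

Lemma In_ball_dfs d N x : In x (ball_dfs d N) <-> valid d x /\ (length x < N)%nat.
Proof.
  destruct N as [|k]; cbn [ball_dfs In].
  - simpl; split; [tauto|lia].
  - rewrite in_flat_map; split.
    + intros [<-|(i & Hi & Hx)]; [simpl; split; auto; lia|].
      apply In_subtree in Hx as (w & -> & Hl & Hf); apply in_seq in Hi.
      simpl; split; [split|]; auto; lia.
    + intros [Hv Hl]; destruct x as [|i w]; [auto|right].
      destruct Hv as [Hi Hf]; exists i; split; [apply in_seq; lia|].
      apply In_subtree; exists w; simpl in Hl; repeat split; auto; lia.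
Qed.

Lemma In_level d k x : In x (level d k) <-> valid d x /\ length x = k.
Proof.
  revert x; induction k as [|k IH]; intros x; cbn [level].
  - split; [intros [<-|[]]; simpl; auto|].
    intros [_ H]; destruct x; simpl in *; auto; lia.
  - rewrite in_flat_map; split.
    + intros (y & Hy & Hx); apply IH in Hy as [Hv Hl].
      destruct y as [|a w]; unfold children in Hx;
        apply in_map_iff in Hx as (i & <- & Hi); apply in_seq in Hi.
      * simpl in *; split; [split; [lia|constructor]|lia].
      * split; [apply valid_snoc; auto; lia|]; rewrite length_app; simpl in *; lia.
    + intros [Hv Hl].
      destruct (exists_last (l := x)) as (y & i & ->); [intros ->; simpl in Hl; lia|].
      rewrite length_app in Hl; simpl in Hl.
      exists y; split; [apply IH; split; [apply (valid_app_l d y [i]); auto|lia]|].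
      destruct y as [|a w]; unfold children; apply in_map_iff; exists i; split; auto;
        apply in_seq; simpl in Hv.
      * lia.
      * destruct Hv as [_ Hf]; apply Forall_app in Hf as [_ Hf]; inversion Hf; lia.
Qed.

Lemma In_ball d N x : In x (ball d N) <-> valid d x /\ (length x < N)%nat.
Proof.
  induction N as [|N IH]; simpl.
  - split; [tauto|lia].
  - rewrite in_app_iff, IH, In_level; split.
    + intros [[]|[]]; split; auto; lia.
    + intros [Hv Hl]; destruct (Nat.eq_dec (length x) N); [right|left]; split; auto; lia.
Qed.

Lemma ball_dfs_same_elements d N x : In x (ball d N) <-> In x (ball_dfs d N).
Proof. rewrite In_ball, In_ball_dfs; tauto. Qed.

(** * Infection along paths *)

(* Walking down from [v] along the child indices [w], carrying the reach [r]
   inherited from the ancestors: at a vertex the reach becomes [max r (om v)],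
   and each step costs one unit. *)
Fixpoint walk (om : config) (v : vertex) (r : nat) (w : list nat) : option nat :=
  match w with
  | [] => Some r
  | i :: w' =>
      let s := Nat.max r (om v) in
      if (1 <=? s)%nat then walk om (v ++ [i]) (s - 1) w' else None
  end.

Lemma walk_app om v r w1 w2 : walk om v r (w1 ++ w2) =
  match walk om v r w1 with Some s => walk om (v ++ w1) s w2 | None => None end.
Proof.
  revert v r; induction w1 as [|i w1 IH]; intros v r; cbn [walk app].
  - rewrite app_nil_r; auto.
  - destruct (1 <=? Nat.max r (om v))%nat; auto; rewrite IH, <- app_assoc; auto.
Qed.

Lemma walk_within_reach om w v r :
  (length w <= Nat.max r (om v))%nat -> walk om v r w <> None.
Proof.
  revert v r; induction w as [|i w IH]; intros v r H; cbn [walk]; [congruence|].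
  simpl in H; destruct (Nat.leb_spec 1 (Nat.max r (om v))); [apply IH|]; lia.
Qed.

Lemma walk_local d om om' w : forall v r,
  (forall y, valid d y -> (length y < length v + length w)%nat -> om y = om' y) ->
  valid d (v ++ w) -> walk om v r w = walk om' v r w.
Proof.
  induction w as [|i w IH]; intros v r H Hv; cbn [walk]; auto.
  rewrite (H v) by (try apply (valid_app_l d v (i :: w)); auto; simpl; lia).
  destruct (1 <=? _)%nat; auto.
  apply IH; [|rewrite <- app_assoc; auto].
  intros y Hy1 Hy; apply H; auto; rewrite length_app in Hy; simpl in *; lia.
Qed.

Lemma infected_valid d om x : infected d om x -> valid d x.
Proof. induction 1; simpl; auto. Qed.

Lemma infected_walk d om x : infected d om x -> walk om [] 0 x <> None.
Proof.
  induction 1 as [|u w _ IH _ Hw]; cbn [walk]; [congruence|].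
  rewrite walk_app; destruct (walk om [] 0 u); [|congruence].
  apply walk_within_reach; simpl; lia.
Qed.

(* Invariant: the current vertex [v] lies below an infected [u] whose ball still
   covers the remaining reach [r]. *)
Lemma walk_infected d om w : forall v r,
  (exists u w0, v = u ++ w0 /\ infected d om u /\ (length w0 + r <= om u)%nat) ->
  valid d (v ++ w) -> walk om v r w <> None -> infected d om (v ++ w).
Proof.
  induction w as [|i w IH]; intros v r (u & w0 & -> & Hu & Hl) Hv Hw.
  - rewrite app_nil_r in *; apply inf_step; auto; lia.
  - cbn [walk] in Hw.
    destruct (Nat.leb_spec 1 (Nat.max r (om (u ++ w0)))) as [Hm|]; [|congruence].
    replace ((u ++ w0) ++ i :: w) with (((u ++ w0) ++ [i]) ++ w)
      by (rewrite <- !app_assoc; auto).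
    apply (IH _ (Nat.max r (om (u ++ w0)) - 1)%nat); auto;
      [|rewrite <- !app_assoc in *; auto].
    destruct (Nat.le_ge_cases r (om (u ++ w0))) as [Hc|Hc].
    + rewrite Nat.max_r in * by auto; exists (u ++ w0), [i]; repeat split; [|simpl; lia].
      apply inf_step; auto; [|lia].
      apply (valid_app_l d _ (i :: w)); auto.
    + rewrite Nat.max_l in * by auto; exists u, (w0 ++ [i]).
      rewrite app_assoc, length_app; simpl; repeat split; auto; lia.
Qed.

Lemma infected_iff_walk d om x : infected d om x <-> valid d x /\ walk om [] 0 x <> None.
Proof.
  split; [intros H; split; [apply (infected_valid d om)|apply (infected_walk d)]; auto|].
  intros [Hv Hw]; apply (walk_infected d om x [] 0); auto.
  exists [], []; repeat split; [constructor|simpl; lia].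
Qed.

Fixpoint reaches (d : nat) (v : vertex) (r k : nat) (om : config) : Prop :=
  match k with
  | O => True
  | S k' =>
      let s := Nat.max r (om v) in
      (1 <= s)%nat /\ exists i, (i < d)%nat /\ reaches d (v ++ [i]) (s - 1) k' om
  end.

Definition root_reaches (d N : nat) (om : config) : Prop :=
  match N with
  | O => True
  | S k => (1 <= om [])%nat /\ exists i, (i <= d)%nat /\ reaches d [i] (om [] - 1) k om
  end.

Lemma reaches_walk d k v r om : reaches d v r k om <->
  exists w, length w = k /\ Forall (fun i => (i < d)%nat) w /\ walk om v r w <> None.
Proof.
  revert v r; induction k as [|k IH]; intros v r; simpl.
  - split; [intros _; exists []; simpl; repeat split; auto; congruence|auto].
  - split.
    + intros [H1 (i & Hi & Hr)]; apply IH in Hr as (w & Hl & Hf & Hw).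
      exists (i :: w); cbn [walk length]; repeat split; auto.
      destruct (Nat.leb_spec 1 (Nat.max r (om v))); [exact Hw|lia].
    + intros ([|i w] & Hl & Hf & Hw); [discriminate|]; cbn [walk length] in Hw, Hl; inversion Hf; subst.
      destruct (Nat.leb_spec 1 (Nat.max r (om v))); [|congruence].
      split; auto; exists i; split; auto; apply IH; exists w; repeat split; auto.
Qed.

Lemma root_reaches_walk d N om : root_reaches d N om <->
  exists x, length x = N /\ valid d x /\ walk om [] 0 x <> None.
Proof.
  destruct N as [|k]; simpl.
  - split; [intros _; exists []; simpl; repeat split; auto; congruence|auto].
  - split.
    + intros [H1 (i & Hi & Hr)]; apply reaches_walk in Hr as (w & Hl & Hf & Hw).
      exists (i :: w); cbn [walk length]; repeat split; auto.
      rewrite Nat.max_0_l; destruct (Nat.leb_spec 1 (om [])); [exact Hw|lia].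
    + intros ([|i w] & Hl & Hv & Hw); [discriminate|]; destruct Hv as [Hi Hf].
      cbn [walk length] in Hw, Hl; rewrite Nat.max_0_l in Hw; destruct (Nat.leb_spec 1 (om [])); [|congruence].
      split; auto; exists i; split; auto; apply reaches_walk; exists w; repeat split; auto.
Qed.

Lemma percolates_deep d om N :
  percolates d om -> exists x, infected d om x /\ (N <= length x)%nat.
Proof.
  intros Hperc; apply NNPP; intros Hshallow; apply Hperc.
  exists (ball d N); intros v Hv; apply In_ball; split; [apply (infected_valid d om); auto|].
  destruct (Nat.lt_ge_cases (length v) N); auto.
  exfalso; apply Hshallow; eauto.
Qed.

Lemma percolates_of_unbounded d om :
  (forall M, exists x, infected d om x /\ (M < length x)%nat) -> percolates d om.
Proof.
  intros H (l & Hl).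
  destruct (H (list_max (map (@length nat) l))) as (x & Hx & Hlen).
  assert (Hmax : Forall (fun k => (k <= list_max (map (@length nat) l))%nat) (map (@length nat) l))
    by (apply list_max_le; lia).
  rewrite Forall_forall in Hmax.
  specialize (Hmax (length x) (in_map _ _ _ (Hl x Hx))); lia.
Qed.

Lemma infected_ray d om x : (1 <= d)%nat -> infected d om x ->
  (forall v, (length x <= length v)%nat -> (1 <= om v)%nat) ->
  forall j, infected d om (x ++ repeat 0%nat j).
Proof.
  intros Hd Hx Hdeep j; induction j as [|j IH]; [rewrite app_nil_r; auto|].
  replace (x ++ repeat 0%nat (S j)) with ((x ++ repeat 0%nat j) ++ [0%nat])
    by (rewrite <- app_assoc, <- repeat_cons; auto).
  apply inf_step; auto.
  - apply valid_snoc; [apply (infected_valid d om); auto|lia].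
  - apply Hdeep; rewrite length_app; lia.
Qed.

(* For radii bounded by [n >= 1], the cylinder hull of [V] is the event that some
   vertex at depth [N] is infected: any infected path can be continued forever
   by setting all radii below depth [N] to [n]. *)
Lemma cyl_hull_percolates_iff d n N om : (1 <= d)%nat -> (1 <= n)%nat ->
  (forall v, (om v <= n)%nat) ->
  (cyl_hull d n N (percolates d) om <-> root_reaches d N om).
Proof.
  intros Hd Hn Hbound; rewrite root_reaches_walk; split.
  - intros (om' & _ & Hagree & Hperc).
    destruct (percolates_deep d om' N Hperc) as (x & Hx & HN).
    pose proof (infected_valid d om' x Hx) as Hvx.
    assert (Hv : valid d (firstn N x))
      by (apply (valid_app_l d _ (skipn N x)); rewrite firstn_skipn; auto).
    exists (firstn N x); repeat split; [apply firstn_length_le; auto|auto|].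
    rewrite (walk_local d om om'); auto.
    + intros Hw; apply (infected_walk d om' x Hx).
      rewrite <- (firstn_skipn N x), walk_app, Hw; auto.
    + intros y Hy Hl; symmetry; apply Hagree, In_ball; split; auto.
      rewrite firstn_length_le in Hl; simpl in Hl; auto.
  - intros (x & Hl & Hv & Hw).
    set (om' := fun y : vertex => if (length y <? N)%nat then om y else n).
    assert (Hshallow : forall y, (length y < N)%nat -> om' y = om y)
      by (intros y Hy; unfold om'; destruct (Nat.ltb_spec (length y) N); lia).
    assert (Hdeep : forall y, (N <= length y)%nat -> om' y = n)
      by (intros y Hy; unfold om'; destruct (Nat.ltb_spec (length y) N); lia).
    exists om'; repeat split.
    + intros v _; unfold om'; destruct (length v <? N)%nat; auto.
    + intros v Hin; apply In_ball in Hin; apply Hshallow; tauto.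
    + apply percolates_of_unbounded; intros M.
      exists (x ++ repeat 0%nat (S M)); split; [|rewrite length_app, repeat_length; lia].
      apply infected_ray; auto.
      * apply infected_iff_walk; split; auto.
        rewrite <- (walk_local d om om'); auto.
        intros y _ Hy; symmetry; apply Hshallow; simpl in Hy; lia.
      * intros v Hlen; rewrite Hdeep; lia.
Qed.

(** * The survival recursion *)

Section Survival.

Variables (d n : nat) (p : R).

(* [survival k r] is the probability that the walk from a vertex entered with
   inherited reach [r] gets [k] levels down ([expect_reaches]). *)
Fixpoint survival (k r : nat) : R :=
  match k with
  | O => 1
  | S k' => Ebin n p (fun j => match Nat.max r j with
                               | O => 0
                               | S m => 1 - (1 - survival k' m) ^ d
                               end)
  end.

Definition child_survival (k m : nat) : R :=
  match m with O => 0 | S m' => 1 - (1 - survival k m') ^ d end.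

Lemma survival_S k r : survival (S k) r = Ebin n p (fun j => child_survival k (Nat.max r j)).
Proof. reflexivity. Qed.

Definition root_survival (N : nat) : R :=
  match N with
  | O => 1
  | S k => Ebin n p (fun j => match j with
                              | O => 0
                              | S m => 1 - (1 - survival k m) ^ S d
                              end)
  end.

Lemma reaches_local k : forall u r o o', (forall w, o (u ++ w) = o' (u ++ w)) ->
  (reaches d u r k o <-> reaches d u r k o').
Proof.
  induction k as [|k IH]; intros u r o o' H; simpl; [tauto|].
  rewrite <- (app_nil_r u), H, app_nil_r.
  split; intros [H1 (i & Hi & Hr)]; split; auto; exists i; split; auto;
    (eapply IH; [|exact Hr]); intros w; rewrite <- app_assoc; auto.
Qed.

Lemma child_prefix_inj (v : vertex) a i w w' : (v ++ [a]) ++ w = (v ++ [i]) ++ w' -> a = i.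
Proof.
  rewrite <- !app_assoc; intros H; apply app_inv_head in H; simpl in H; congruence.
Qed.

(* The subtrees of distinct children are disjoint, so the events that the
   children [a, ..., a+c-1] start a path of length [k] are independent. *)
Lemma expect_no_child_reaches v k s q :
  (forall i om, expect n p (subtree d (v ++ [i]) k)
                  (fun o => ind (reaches d (v ++ [i]) s k o)) om = q) ->
  forall c a om,
  expect n p (flat_map (fun i => subtree d (v ++ [i]) k) (seq a c))
    (fun o => 1 - ind (exists i, (a <= i < a + c)%nat /\ reaches d (v ++ [i]) s k o)) om
  = (1 - q) ^ c.
Proof.
  intros Hq c; induction c as [|c IH]; intros a om; cbn [seq flat_map].
  - simpl; rewrite ind_false; [ring|]; intros (i & Hi & _); lia.
  - set (first := fun o => 1 - ind (reaches d (v ++ [a]) s k o)).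
    set (rest := fun o => 1 - ind (exists i, (S a <= i < S a + c)%nat /\ reaches d (v ++ [i]) s k o)).
    rewrite (expect_ext _ _ _ _ (fun o => first o * rest o)).
    2:{ intros o; unfold first, rest; rewrite <- ind_or; f_equal; apply ind_iff; split.
        - intros (i & Hi & H); destruct (Nat.eq_dec i a) as [->|]; [left|right]; auto.
          exists i; split; auto; lia.
        - intros [H|(i & Hi & H)]; [exists a|exists i]; split; auto; lia. }
    rewrite (expect_app_mul n p _ _ (fun x => exists w, x = (v ++ [a]) ++ w)
               (fun x => exists i w, (S a <= i < S a + c)%nat /\ x = (v ++ [i]) ++ w)).
    + unfold first, rest; rewrite expect_compl, Hq, IH; reflexivity.
    + intros o o' H; unfold first; f_equal; apply ind_iff, reaches_local.
      intros w; apply H; eauto.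
    + intros o o' H; unfold rest; f_equal; apply ind_iff.
      split; intros (i & Hi & Hr); exists i; split; auto;
        (eapply reaches_local; [|exact Hr]); intros w;
        first [apply H; eauto | symmetry; apply H; eauto].
    + intros x Hx (i & w & Hi & ->); apply In_subtree in Hx as (w' & Hx & _).
      apply child_prefix_inj in Hx; lia.
    + intros x Hx (w & ->); apply in_flat_map in Hx as (i & Hi & Hx); apply in_seq in Hi.
      apply In_subtree in Hx as (w' & Hx & _); apply child_prefix_inj in Hx; lia.
Qed.

Lemma expect_some_child_reaches v k s q c om :
  (forall i om, expect n p (subtree d (v ++ [i]) k)
                  (fun o => ind (reaches d (v ++ [i]) s k o)) om = q) ->
  expect n p (flat_map (fun i => subtree d (v ++ [i]) k) (seq 0 c))
    (fun o => ind (exists i, (i < c)%nat /\ reaches d (v ++ [i]) s k o)) om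
  = 1 - (1 - q) ^ c.
Proof.
  intros Hq; rewrite <- (expect_no_child_reaches v k s q Hq c 0 om), <- expect_compl.
  apply expect_ext; intros o.
  rewrite (ind_iff _ (exists i, (0 <= i < 0 + c)%nat /\ reaches d (v ++ [i]) s k o)); [ring|].
  split; intros (i & Hi & H); exists i; split; auto; lia.
Qed.

Lemma not_In_child_subtrees v k a c :
  ~ In v (flat_map (fun i => subtree d (v ++ [i]) k) (seq a c)).
Proof.
  intros Hin; apply in_flat_map in Hin as (i & _ & Hin).
  apply In_subtree in Hin as (w & Hw & _).
  apply (f_equal (@length nat)) in Hw; rewrite !length_app in Hw; simpl in Hw; lia.
Qed.

Lemma expect_reaches k : forall v r om,
  expect n p (subtree d v k) (fun o => ind (reaches d v r k o)) om = survival k r.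
Proof.
  induction k as [|k IH]; intros v r om; [apply ind_true; simpl; auto|].
  rewrite survival_S; cbn [subtree expect]; apply Ebin_ext; intros j _.
  rewrite (expect_ext_sampled _ _ _ _ (fun o => match Nat.max r j with
      | O => 0
      | S m => ind (exists i, (i < d)%nat /\ reaches d (v ++ [i]) m k o)
      end)).
  - unfold child_survival; destruct (Nat.max r j) as [|m]; [apply expect_const|].
    apply expect_some_child_reaches; intros; apply IH.
  - intros o Hoff _.
    assert (Hv : o v = j) by (rewrite Hoff; [apply upd_eq|apply not_In_child_subtrees]).
    cbn [reaches]; rewrite Hv; destruct (Nat.max r j) as [|m].
    + apply ind_false; lia.
    + apply ind_iff; rewrite Nat.sub_succ, Nat.sub_0_r; split; [intros [_ H]|split]; auto; lia.
Qed.

Lemma expect_root_reaches N om :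
  expect n p (ball_dfs d N) (fun o => ind (root_reaches d N o)) om = root_survival N.
Proof.
  destruct N as [|k]; [apply ind_true; simpl; auto|].
  cbn [ball_dfs expect root_survival]; apply Ebin_ext; intros j _.
  rewrite (expect_ext_sampled _ _ _ _ (fun o => match j with
      | O => 0
      | S m => ind (exists i, (i < S d)%nat /\ reaches d ([] ++ [i]) m k o)
      end)).
  - destruct j as [|m]; [apply expect_const|].
    apply (expect_some_child_reaches []); intros; apply expect_reaches.
  - intros o Hoff _.
    assert (Hv : o [] = j)
      by (rewrite Hoff; [apply upd_eq|apply (not_In_child_subtrees [])]).
    unfold root_reaches; rewrite Hv; destruct j as [|m].
    + apply ind_false; lia.
    + apply ind_iff; rewrite Nat.sub_succ, Nat.sub_0_r.
      split; [intros [_ (i & Hi & H)]|intros (i & Hi & H); split; [lia|]];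
        exists i; split; auto; lia.
Qed.

Lemma cyl_prob_percolates (Hd : (1 <= d)%nat) (Hn : (1 <= n)%nat) N :
  cyl_prob d n p (percolates d) N = root_survival N.
Proof.
  unfold cyl_prob; rewrite integ_expect, (expect_same_elements _ _ _ (ball_dfs d N))
    by apply ball_dfs_same_elements.
  rewrite <- (expect_root_reaches N (fun _ => 0%nat)).
  apply expect_ext_sampled; intros o Hoff Hon; apply ind_iff, cyl_hull_percolates_iff; auto.
  intros v; destruct (in_dec (list_eq_dec Nat.eq_dec) v (ball_dfs d N)); auto.
  rewrite Hoff by auto; lia.
Qed.

End Survival.

(** * Elementary inequalities on [0,1] *)

Lemma pow_unit x m : 0 <= x <= 1 -> 0 <= x ^ m <= 1.
Proof.
  intros H; split; [apply pow_le; lra|].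
  rewrite <- (pow1 m); apply pow_incr; lra.
Qed.

Lemma pow_unit_antitone x a b : 0 <= x <= 1 -> (a <= b)%nat -> x ^ b <= x ^ a.
Proof.
  intros Hx H; replace b with (a + (b - a))%nat by lia; rewrite pow_add.
  pose proof (pow_unit x (b - a) Hx); pose proof (pow_unit x a Hx); nra.
Qed.

Lemma one_minus_pow_monotone x y e :
  0 <= x <= y -> y <= 1 -> 1 - (1 - x) ^ e <= 1 - (1 - y) ^ e.
Proof. intros H1 H2; assert ((1 - y) ^ e <= (1 - x) ^ e) by (apply pow_incr; lra); lra. Qed.

Lemma pow_one_minus_le h N :
  0 <= h <= 1 -> (1 - h) ^ N <= 1 - INR N * h + INR N * (INR N - 1) / 2 * h ^ 2.
Proof.
  intros Hh; induction N as [|N IH]; [simpl; lra|].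
  rewrite S_INR; simpl pow.
  assert (H1 : (1 - h) * (1 - h) ^ N <= (1 - h) * (1 - INR N * h + INR N * (INR N - 1) / 2 * h ^ 2))
    by (apply Rmult_le_compat_l; lra).
  assert (HN : 0 <= INR N * (INR N - 1)).
  { destruct N; [simpl; lra|]; rewrite S_INR; pose proof (pos_INR N); nra. }
  assert (0 <= INR N * (INR N - 1) * (h * h * h)) by (apply Rmult_le_pos; auto; nra).
  simpl in H1; nra.
Qed.

Lemma pow_one_minus_ge h e :
  0 <= h <= 1 -> 1 - INR e * h + INR (e - 1) * h ^ 2 <= (1 - h) ^ e.
Proof.
  intros Hh; destruct e as [|e]; [simpl; lra|]; rewrite Nat.sub_succ, Nat.sub_0_r.
  induction e as [|e IH]; [simpl; lra|].
  rewrite !S_INR in *; change ((1 - h) ^ S (S e)) with ((1 - h) * (1 - h) ^ S e).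
  assert (H1 : (1 - h) * (1 - (INR e + 1) * h + INR e * h ^ 2) <= (1 - h) * (1 - h) ^ S e)
    by (apply Rmult_le_compat_l; lra).
  pose proof (pos_INR e).
  assert (0 <= INR e * (h * h) * (1 - h)) by (apply Rmult_le_pos; [apply Rmult_le_pos|]; nra).
  simpl in *; nra.
Qed.

Lemma bernoulli h M : 0 <= h <= 1 -> 1 - INR M * h <= (1 - h) ^ M.
Proof.
  intros Hh; pose proof (pow_one_minus_ge h M Hh).
  assert (0 <= INR (M - 1) * h ^ 2) by (apply Rmult_le_pos; [apply pos_INR|simpl; nra]); lra.
Qed.

Lemma one_minus_pow_ge_quadratic c N :
  0 <= c <= 1 -> INR N * c - INR N * INR N * c * c <= 1 - (1 - c) ^ N.
Proof.
  intros Hc; pose proof (pow_one_minus_le c N Hc); pose proof (pos_INR N).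
  assert (INR N * (INR N - 1) / 2 * c ^ 2 <= INR N * INR N * c * c) by (simpl; nra); lra.
Qed.

Lemma quadratic_increments_approach_one (y : nat -> R) c :
  0 < c -> (forall m, 0 <= y m <= 1) -> (forall m, y m + c * (1 - y m) ^ 2 <= y (S m)) ->
  forall eps, 0 < eps -> exists m, 1 - eps < y m.
Proof.
  intros Hc Hy Hstep eps Heps.
  assert (Hinc : forall m, 0 <= c * (1 - y m) ^ 2)
    by (intros; apply Rmult_le_pos; [lra|apply pow2_ge_0]).
  assert (Hgrow : forall m, 1 - eps < y m \/ INR m * (c * eps ^ 2) <= y m).
  { induction m as [|m [IH|IH]]; [right; simpl; pose proof (Hy 0%nat); lra| |].
    - left; pose proof (Hstep m); pose proof (Hinc m); lra.
    - destruct (Rlt_le_dec (1 - eps) (y m)) as [Hclose|Hfar].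
      + left; pose proof (Hstep m); pose proof (Hinc m); lra.
      + right; rewrite S_INR; pose proof (Hstep m).
        assert (eps ^ 2 <= (1 - y m) ^ 2) by (apply pow_incr; lra).
        assert (c * eps ^ 2 <= c * (1 - y m) ^ 2) by (apply Rmult_le_compat_l; lra); lra. }
  destruct (INR_archimed (c * eps ^ 2) 1) as [M HM]; [apply Rmult_lt_0_compat; [|apply pow_lt]; lra|].
  exists M; destruct (Hgrow M); auto; pose proof (Hy M); lra.
Qed.

Section SurvivalBounds.

Variables (d n : nat) (p : R).
Hypothesis Hp : 0 <= p <= 1.

Lemma survival_bounds k r : 0 <= survival d n p k r <= 1.
Proof.
  revert r; induction k as [|k IH]; intros r; simpl; [lra|].
  split; [apply Ebin_ge0|apply Ebin_le_const]; auto; intros j;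
    destruct (Nat.max r j) as [|m]; try lra;
    pose proof (IH m); pose proof (pow_unit (1 - survival d n p k m) d); lra.
Qed.

Lemma child_survival_bounds k m : 0 <= child_survival d n p k m <= 1.
Proof.
  destruct m as [|m]; simpl; [lra|].
  pose proof (survival_bounds k m); pose proof (pow_unit (1 - survival d n p k m) d); lra.
Qed.

Lemma survival_monotone k : forall r r', (r <= r')%nat -> survival d n p k r <= survival d n p k r'.
Proof.
  induction k as [|k IH]; intros r r' H; [simpl; lra|].
  rewrite !survival_S; apply Ebin_le; auto; intros j _.
  destruct (Nat.max r j) as [|m] eqn:Em, (Nat.max r' j) as [|m'] eqn:Em'; try lia.
  - simpl; lra.
  - apply child_survival_bounds with (m := S m').
  - apply one_minus_pow_monotone; [split|];
      [apply survival_bounds|apply IH; lia|apply survival_bounds].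
Qed.

Lemma child_survival_monotone k m m' :
  (m <= m')%nat -> child_survival d n p k m <= child_survival d n p k m'.
Proof.
  intros H; destruct m as [|m], m' as [|m']; try lia.
  - simpl; lra.
  - apply child_survival_bounds with (m := S m').
  - apply one_minus_pow_monotone; [split|];
      [apply survival_bounds|apply survival_monotone; lia|apply survival_bounds].
Qed.

Lemma survival_antitone a b : (a <= b)%nat -> forall r, survival d n p b r <= survival d n p a r.
Proof.
  assert (Hstep : forall k r, survival d n p (S k) r <= survival d n p k r).
  { induction k as [|k IH]; intros r; [apply survival_bounds|].
    rewrite (survival_S _ _ _ (S k)), (survival_S _ _ _ k); apply Ebin_le; auto; intros j _.
    unfold child_survival; destruct (Nat.max r j) as [|m]; [lra|].
    apply one_minus_pow_monotone; [split|]; [apply survival_bounds|apply IH|apply survival_bounds]. }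
  intros H r; induction H; [lra|]; eapply Rle_trans; eauto.
Qed.

End SurvivalBounds.

(** * Survival in the supercritical regime *)

Definition frontier (d j : nat) : nat := match j with O => O | S _ => d ^ j end.

Section Supercritical.

Variables (d n : nat) (p : R).
Hypothesis Hp : 0 <= p <= 1.
Hypothesis Hd : (1 <= d)%nat.

(* With reach [r] all [d ^ r] descendants at depth [r] are infected, and each of
   them independently starts a path of length [k - r] with probability at least
   [survival (k - r) 0]. *)
Definition spread_survival (k r : nat) : R :=
  if (k <=? r)%nat then 1 else 1 - (1 - survival d n p (k - r) 0) ^ (d ^ r).

Lemma spread_survival_bounds k r : 0 <= spread_survival k r <= 1.
Proof.
  unfold spread_survival; destruct (k <=? r)%nat; [lra|].
  pose proof (survival_bounds d n p Hp (k - r) 0).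
  pose proof (pow_unit (1 - survival d n p (k - r) 0) (d ^ r)); lra.
Qed.

Lemma spread_survival_S k r :
  spread_survival (S k) (S r) = 1 - (1 - spread_survival k r) ^ d.
Proof.
  unfold spread_survival; cbn [Nat.leb]; destruct (Nat.leb_spec k r).
  - replace (1 - 1) with 0 by ring; rewrite pow_i by lia; ring.
  - replace (S k - S r)%nat with (k - r)%nat by lia.
    replace (1 - (1 - (1 - survival d n p (k - r) 0) ^ d ^ r))
      with ((1 - survival d n p (k - r) 0) ^ d ^ r) by ring.
    rewrite <- pow_mult, Nat.mul_comm; reflexivity.
Qed.

Lemma survival_ge_spread k : forall r, spread_survival k r <= survival d n p k r.
Proof.
  induction k as [|k IH]; intros r; [unfold spread_survival; simpl; lra|].
  destruct r as [|r].
  - unfold spread_survival; simpl; lra.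
  - rewrite spread_survival_S, survival_S; apply Ebin_ge_const; auto; intros j _.
    eapply Rle_trans; [|apply child_survival_monotone with (m := S r); auto; lia].
    apply one_minus_pow_monotone; [split|];
      [apply spread_survival_bounds|apply IH|apply survival_bounds; auto].
Qed.

(* Induction on [k]: a root of radius [j] infects its [frontier d j] vertices at
   depth [j], each of which survives with probability at least [c]. *)
Lemma survival_ge_subfixed_point c : 0 < c <= 1 ->
  c <= Ebin n p (fun j => 1 - (1 - c) ^ frontier d j) ->
  forall k, c <= survival d n p k 0.
Proof.
  intros Hc Hfix k; induction k as [k IH] using lt_wf_ind.
  destruct k as [|k]; [simpl; lra|].
  eapply Rle_trans; [exact Hfix|]; rewrite survival_S; apply Ebin_le; auto; intros j _.
  rewrite Nat.max_0_l; destruct j as [|m]; [simpl; lra|].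
  apply Rle_trans with (spread_survival (S k) (S m)).
  - unfold spread_survival, frontier; destruct (Nat.leb_spec (S k) (S m)).
    + pose proof (pow_unit (1 - c) (d ^ S m)); lra.
    + apply one_minus_pow_monotone; [split|];
        [lra|apply IH; lia|apply survival_bounds; auto].
  - rewrite spread_survival_S; apply one_minus_pow_monotone; [split|];
      [apply spread_survival_bounds|apply survival_ge_spread|apply survival_bounds; auto].
Qed.

Lemma Ebin_frontier (Hn : (1 <= n)%nat) :
  Ebin n p (fun j => INR (frontier d j)) = (p * INR d + 1 - p) ^ n - (1 - p) ^ n.
Proof.
  rewrite <- Ebin_pow, <- binom_pmf_0; unfold Ebin; rewrite !(decomp_sum _ n) by lia.
  rewrite (sum_eq _ (fun i => binom_pmf n p (S i) * INR d ^ S i))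
    by (intros; unfold frontier; rewrite pow_INR; auto).
  simpl; ring.
Qed.

Lemma survival_le_root_survival N : survival d n p N 0 <= root_survival d n p N.
Proof.
  destruct N as [|k]; [simpl; lra|].
  rewrite survival_S; apply Ebin_le; auto; intros j _.
  rewrite Nat.max_0_l; destruct j as [|m]; [simpl; lra|].
  change (child_survival d n p k (S m)) with (1 - (1 - survival d n p k m) ^ d).
  pose proof (survival_bounds d n p Hp k m) as Hs.
  pose proof (pow_unit (1 - survival d n p k m) d ltac:(lra)).
  rewrite <- tech_pow_Rmult; nra.
Qed.

(* The lower bound [1 - (1 - c) ^ N >= N c - N^2 c^2] shows that the map of
   [survival_ge_subfixed_point] has slope [E (frontier R) > 1] at [0], hence
   admits the sub-fixed point [c = (E f - 1) / E f^2]. *)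
Lemma root_survival_lower_bound (Hn : (1 <= n)%nat) :
  (p * INR d + 1 - p) ^ n - (1 - p) ^ n > 1 ->
  exists c, 0 < c /\ forall N, c <= root_survival d n p N.
Proof.
  intros Hsuper.
  set (mu := Ebin n p (fun j => INR (frontier d j))).
  set (K := Ebin n p (fun j => INR (frontier d j) * INR (frontier d j))).
  assert (Hmu : mu > 1) by (unfold mu; rewrite Ebin_frontier; auto).
  assert (HK : mu <= K).
  { apply Ebin_le; auto; intros j _.
    destruct (frontier d j) as [|f]; [simpl; lra|].
    assert (1 <= INR (S f)) by (apply (le_INR 1); lia); nra. }
  set (c := (mu - 1) / K).
  assert (Hc : 0 < c <= 1).
  { unfold c; split; [apply Rdiv_lt_0_compat; lra|].
    apply Rmult_le_reg_r with K; [lra|]; field_simplify; lra. }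
  exists c; split; [lra|]; intros N.
  apply Rle_trans with (survival d n p N 0); [|apply survival_le_root_survival].
  apply survival_ge_subfixed_point; auto.
  apply Rle_trans with (Ebin n p (fun j =>
      c * INR (frontier d j) + - (c * c) * (INR (frontier d j) * INR (frontier d j)))).
  - rewrite Ebin_lincomb; fold mu K.
    replace (c * mu + - (c * c) * K) with (c * (mu - c * K)) by ring.
    unfold c; field_simplify; lra.
  - apply Ebin_le; auto; intros j _.
    pose proof (one_minus_pow_ge_quadratic c (frontier d j)); lra.
Qed.

End Supercritical.

(** * Extinction in the subcritical regime *)

(* [ball_size d m = 1 + d + ... + d ^ m] vertices lie in the cone of radius [m]
   below a vertex; [cone_size d j] of them, the vertex itself excluded, for [j >= 1]. *)
Fixpoint ball_size (d m : nat) : nat :=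
  match m with O => 1 | S m' => S (d * ball_size d m') end.

Definition cone_size (d j : nat) : nat :=
  match j with O => O | S m => d * ball_size d m end.

Lemma ball_size_pos d m : (1 <= ball_size d m)%nat.
Proof. destruct m; simpl; lia. Qed.

Lemma ball_size_monotone d a b : (1 <= d)%nat -> (a <= b)%nat -> (ball_size d a <= ball_size d b)%nat.
Proof. intros Hd; induction 1; simpl; nia. Qed.

Lemma cone_size_geometric d j : INR (cone_size d j) * (INR d - 1) = INR d * (INR d ^ j - 1).
Proof.
  assert (Hball : forall m, INR (ball_size d m) * (INR d - 1) = INR d ^ S m - 1).
  { induction m as [|m IH]; [simpl; ring|].
    cbn [ball_size]; rewrite S_INR, mult_INR, <- tech_pow_Rmult.
    replace ((INR d * INR (ball_size d m) + 1) * (INR d - 1))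
      with (INR d * (INR (ball_size d m) * (INR d - 1)) + (INR d - 1)) by ring.
    rewrite IH; ring. }
  destruct j as [|m]; [simpl; ring|].
  cbn [cone_size]; rewrite mult_INR, Rmult_assoc, Hball; simpl; ring.
Qed.

Section Subcritical.

Variables (d n : nat) (p : R).
Hypothesis Hp : 0 <= p <= 1.

Definition extinction (k r : nat) : R := 1 - survival d n p k r.

Definition child_extinction (k m : nat) : R := 1 - child_survival d n p k m.

Lemma extinction_bounds k r : 0 <= extinction k r <= 1.
Proof. pose proof (survival_bounds d n p Hp k r); unfold extinction; lra. Qed.

Lemma child_extinction_bounds k m : 0 <= child_extinction k m <= 1.
Proof. pose proof (child_survival_bounds d n p Hp k m); unfold child_extinction; lra. Qed.

Lemma extinction_monotone a b : (a <= b)%nat -> extinction a 0 <= extinction b 0.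
Proof. intros H; pose proof (survival_antitone d n p Hp a b H 0); unfold extinction; lra. Qed.

Lemma child_extinction_S k m : child_extinction k (S m) = extinction k m ^ d.
Proof. unfold child_extinction, extinction; simpl; ring. Qed.

Lemma extinction_S k r :
  extinction (S k) r = Ebin n p (fun j => child_extinction k (Nat.max r j)).
Proof. unfold extinction, child_extinction; rewrite survival_S, Ebin_compl; reflexivity. Qed.

(* A vertex with reach [r] infects the [ball_size d r] vertices of its cone; if
   the path is to die out within depth [k], each of them must die out within
   depth [k - r] on its own. *)
Lemma extinction_ge_pow k : forall r, extinction (k - r) 0 ^ ball_size d r <= extinction k r.
Proof.
  induction k as [|k IH]; intros r.
  - unfold extinction; simpl; rewrite Rminus_diag, pow_i by apply ball_size_pos; lra.
  - destruct r as [|r]; [rewrite Nat.sub_0_r; cbn [ball_size]; rewrite pow_1; lra|].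
    replace (S k - S r)%nat with (k - r)%nat by lia.
    pose proof (extinction_bounds (k - r) 0) as Hw.
    pose proof (extinction_monotone (k - r) (S k) ltac:(lia)) as Hmono.
    set (w := extinction (k - r) 0) in *.
    set (e := (d * ball_size d r)%nat).
    assert (He : w ^ e <= child_extinction k (S r)).
    { rewrite child_extinction_S; unfold e; rewrite Nat.mul_comm, pow_mult.
      apply pow_incr; split; [apply pow_le; lra|apply IH]. }
    pose proof (pow_unit w e Hw).
    apply Rle_trans with (w ^ e * extinction (S k) 0).
    + cbn [ball_size pow]; fold e; nra.
    + rewrite !extinction_S, <- Ebin_scal; apply Ebin_le; auto; intros j _.
      pose proof (child_extinction_bounds k (Nat.max 0 j)).
      pose proof (child_extinction_bounds k j).
      rewrite Nat.max_0_l; destruct (Nat.le_gt_cases j (S r)).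
      * rewrite Nat.max_l by auto; nra.
      * rewrite Nat.max_r by lia; nra.
Qed.

Definition cone_pgf (w : R) : R := Ebin n p (fun j => w ^ cone_size d j).

(* Dying out within depth [k + 1] is implied by the extinction, within depth
   [k + 1 - n], of each of the [cone_size d R] vertices infected by the root's
   cone (whose radius is at most [n]). *)
Lemma cone_pgf_le_extinction (Hn : (1 <= n)%nat) k :
  cone_pgf (extinction (S k - n) 0) <= extinction (S k) 0.
Proof.
  pose proof (extinction_bounds (S k - n) 0) as Hw.
  unfold cone_pgf; rewrite extinction_S; apply Ebin_le; auto; intros j Hj.
  rewrite Nat.max_0_l; destruct j as [|m]; [unfold child_extinction; simpl; lra|].
  rewrite child_extinction_S; cbn [cone_size]; rewrite Nat.mul_comm, pow_mult.
  apply pow_incr; split; [apply pow_le; lra|].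
  eapply Rle_trans; [|apply extinction_ge_pow].
  apply pow_incr; split; [lra|apply extinction_monotone; lia].
Qed.

Lemma cone_pgf_gap w (Hn : (1 <= n)%nat) :
  (2 <= cone_size d n)%nat -> Ebin n p (fun j => INR (cone_size d j)) <= 1 ->
  0 <= w <= 1 -> w + p ^ n * (1 - w) ^ 2 <= cone_pgf w.
Proof.
  intros Hcone Hmean Hw; set (h := 1 - w).
  apply Rle_trans with (Ebin n p (fun j =>
      1 + 1 * (- h * INR (cone_size d j) + h ^ 2 * INR (cone_size d j - 1)))).
  - rewrite Ebin_affine, Rmult_1_l, Ebin_lincomb.
    assert (Hlast : p ^ n <= Ebin n p (fun j => INR (cone_size d j - 1))).
    { rewrite <- binom_pmf_last, <- (Rmult_1_r (binom_pmf n p n)).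
      eapply Rle_trans; [|apply Ebin_ge_last; auto; intros; apply pos_INR].
      apply Rmult_le_compat_l; [apply binom_pmf_ge0; auto|apply (le_INR 1); lia]. }
    assert (0 <= h) by (unfold h; lra).
    assert (p ^ n * h ^ 2 <= h ^ 2 * Ebin n p (fun j => INR (cone_size d j - 1)))
      by (rewrite Rmult_comm; apply Rmult_le_compat_l; [apply pow2_ge_0|auto]).
    unfold h in *; nra.
  - apply Ebin_le; auto; intros j _.
    pose proof (pow_one_minus_ge h (cone_size d j) ltac:(unfold h; lra)).
    replace w with (1 - h) by (unfold h; ring); lra.
Qed.

Lemma mean_cone_size_le_1 (Hd : (2 <= d)%nat) :
  2 * INR d - INR d * (p * INR d + 1 - p) ^ n >= 1 ->
  Ebin n p (fun j => INR (cone_size d j)) <= 1.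
Proof.
  intros Hsub; assert (Hd' : 2 <= INR d) by (apply (le_INR 2); auto).
  rewrite <- Ebin_pow in Hsub.
  assert (Hscaled : Ebin n p (fun j => INR (cone_size d j)) * (INR d - 1)
                    = INR d * Ebin n p (fun j => INR d ^ j) - INR d).
  { rewrite Rmult_comm, <- Ebin_scal.
    rewrite (Ebin_ext _ _ _ (fun j => INR d * INR d ^ j + - INR d * 1))
      by (intros; rewrite (Rmult_comm (INR d - 1)), cone_size_geometric; ring).
    rewrite Ebin_lincomb, Ebin_one, Rmult_1_r; reflexivity. }
  apply Rmult_le_reg_r with (INR d - 1); lra.
Qed.

Lemma extinction_step (Hd : (2 <= d)%nat) (Hn : (1 <= n)%nat) (Hp' : 0 < p) :
  2 * INR d - INR d * (p * INR d + 1 - p) ^ n >= 1 -> forall m,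
  extinction (m * n) 0 + p ^ n * (1 - extinction (m * n) 0) ^ 2 <= extinction (S m * n) 0.
Proof.
  intros Hsub m.
  replace (S m * n)%nat with (S (m * n + (n - 1))) by nia.
  eapply Rle_trans; [|apply cone_pgf_le_extinction; auto].
  replace (S (m * n + (n - 1)) - n)%nat with (m * n)%nat by nia.
  apply cone_pgf_gap; auto; [|apply mean_cone_size_le_1; auto|apply extinction_bounds].
  destruct n as [|n']; [lia|]; cbn [cone_size]; pose proof (ball_size_pos d n'); nia.
Qed.

(* Within distance [n] of the root there are at most [ball_size d n * (d + 1)]
   vertices, each of which dies out within depth [k - n] with probability at least
   [extinction (k - n) 0]. *)
Lemma root_survival_le k (Hd : (1 <= d)%nat) :
  root_survival d n p (S k) <= INR (ball_size d n * S d) * (1 - extinction (k - n) 0).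
Proof.
  set (w := extinction (k - n) 0); pose proof (extinction_bounds (k - n) 0) as Hw; fold w in Hw.
  apply Ebin_le_const; auto; intros j Hj.
  assert (HB : 0 <= INR (ball_size d n * S d) * (1 - w))
    by (apply Rmult_le_pos; [apply pos_INR|lra]).
  destruct j as [|m]; [lra|].
  change (1 - survival d n p k m) with (extinction k m).
  assert (Hx : w ^ ball_size d n <= extinction k m).
  { eapply Rle_trans; [|apply extinction_ge_pow].
    apply Rle_trans with (w ^ ball_size d m).
    - apply pow_unit_antitone; auto; apply ball_size_monotone; auto; lia.
    - apply pow_incr; split; [lra|apply extinction_monotone; lia]. }
  assert (w ^ (ball_size d n * S d) <= extinction k m ^ S d)
    by (rewrite pow_mult; apply pow_incr; split; auto; apply pow_le; lra).
  pose proof (bernoulli (1 - w) (ball_size d n * S d) ltac:(lra)).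
  replace (1 - (1 - w)) with w in * by ring; lra.
Qed.

Lemma root_survival_vanishes (Hd : (2 <= d)%nat) (Hn : (1 <= n)%nat) (Hp' : 0 < p) :
  2 * INR d - INR d * (p * INR d + 1 - p) ^ n >= 1 ->
  forall eps, 0 < eps -> exists N, root_survival d n p N < eps.
Proof.
  intros Hsub eps Heps.
  set (B := INR (ball_size d n * S d)); assert (HB : 0 <= B) by apply pos_INR.
  destruct (quadratic_increments_approach_one (fun m => extinction (m * n) 0) (p ^ n)
              (pow_lt p n Hp') (fun m => extinction_bounds (m * n) 0)
              (extinction_step Hd Hn Hp' Hsub) (eps / (B + 1)))
    as [m Hm]; [apply Rdiv_lt_0_compat; lra|].
  exists (S (m * n + n)); eapply Rle_lt_trans; [apply root_survival_le; lia|]; fold B.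
  replace (m * n + n - n)%nat with (m * n)%nat by lia.
  apply Rle_lt_trans with (B * (eps / (B + 1))); [apply Rmult_le_compat_l; lra|].
  apply Rmult_lt_reg_r with (B + 1); [lra|].
  replace (B * (eps / (B + 1)) * (B + 1)) with (B * eps) by (field; lra); nra.
Qed.

End Subcritical.

Theorem mainTheorem9 (d n : nat) (p : R) :
  (2 <= d)%nat -> (1 <= n)%nat -> 0 < p < 1 ->
  ((p * INR d + 1 - p) ^ n - (1 - p) ^ n > 1 ->
     exists c : R, 0 < c /\ forall N : nat, c <= cyl_prob d n p (percolates d) N) /\
  (2 * INR d - INR d * (p * INR d + 1 - p) ^ n >= 1 ->
     forall eps : R, 0 < eps -> exists N : nat, cyl_prob d n p (percolates d) N < eps).
Proof.
  intros Hd Hn Hp.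
  assert (Hp' : 0 <= p <= 1) by lra.
  assert (Hcyl : forall N, cyl_prob d n p (percolates d) N = root_survival d n p N)
    by (intros; apply cyl_prob_percolates; lia).
  split.
  - intros Hsuper; destruct (root_survival_lower_bound d n p Hp' ltac:(lia) Hn Hsuper)
      as (c & Hc & Hlow).
    exists c; split; auto; intros N; rewrite Hcyl; apply Hlow.
  - intros Hsub eps Heps.
    destruct (root_survival_vanishes d n p Hp' Hd Hn ltac:(lra) Hsub eps Heps) as [N HN].
    exists N; rewrite Hcyl; exact HN.
Qed.
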